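(* Let $s\ge1$, $n=2s$, and let $A$ be the $n\times n$ matrix with $A_{ij}=1$ if $|i-j|\le s-1$ and $0$ otherwise. Let $D$ be the $s\times s$ matrix with $D_{ij}=1$ if $i+j\le s+1$ and $D_{ij}=2$ if $i+j>s+1$, and let $P$ be the $s\times s$ permutation matrix with $P_{ij}=1$ iff $i+j=s+1$. If $x$ is any eigenvector of $D$ with eigenvalue $\lambda$ and $y=\begin{bmatrix}x\\ Px\end{bmatrix}\in\mathbb R^{n}$, then $Ay=\lambda y$. *)

From mathcomp Require Import all_boot all_order all_algebra.
Set Implicit Arguments. Unset Strict Implicit. Unset Printing Implicit Defensive.
Import Order.TTheory GRing.Theory Num.Theory.
Local Open Scope ring_scope.

(* Indices are 0-based ('I_m); the paper's 1-based conditions are shifted: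
   |i-j| <= s-1 is unchanged; i+j <= s+1 (1-based) becomes i+j <= s-1 (0-based);
   i+j = s+1 (1-based) becomes i+j = s-1 (0-based). *)

Definition bandA (R : ringType) (s : nat) : 'M[R]_(s + s) :=
  \matrix_(i, j) (if (`|(i : nat)%:Z - (j : nat)%:Z|%N <= s.-1)%N then 1 else 0).

Definition matD (R : ringType) (s : nat) : 'M[R]_s :=
  \matrix_(i, j) (if ((i : nat) + j + 2 <= s + 1)%N then 1 else 2%:R).

Definition matP (R : ringType) (s : nat) : 'M[R]_s :=
  \matrix_(i, j) (if ((i : nat) + j + 2 == s + 1)%N then 1 else 0).

From mathcomp Require Import all_boot all_order all_algebra zify.
Import Order.TTheory GRing.Theory Num.Theory.
Local Open Scope ring_scope.

(* Split [A] into s x s blocks [[J, L], [U, J]], where [J] is all ones and [L], [U]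
   are the strictly lower and upper triangular 0/1 matrices.  Since [P] reverses
   columns, [J + L P = D] and [U + J P = P D]; hence
   [A [x; P x] = [D x; P D x] = lambda [x; P x]]. *)

Section BlockDecomposition.

Variables (R : nzRingType) (s : nat).

Lemma matPE i j : matP R s i j = (i == rev_ord j)%:R.
Proof.
rewrite mxE -val_eqE /=.
have -> : (i + j + 2 == s + 1)%N = (i == (s - j.+1)%N :> nat).
  by apply/eqP/eqP; have := ltn_ord j; lia.
by case: eqP.
Qed.

Lemma mulmx_matP m (M : 'M[R]_(m, s)) i j : (M *m matP R s) i j = M i (rev_ord j).
Proof.
rewrite mxE (bigD1 (rev_ord j)) //= big1 => [|k /negPf k_neq].
  by rewrite matPE eqxx mulr1 addr0.
by rewrite matPE k_neq mulr0.
Qed.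

Lemma matP_mulmx n (M : 'M[R]_(s, n)) i j : (matP R s *m M) i j = M (rev_ord i) j.
Proof.
rewrite mxE (bigD1 (rev_ord i)) //= big1 => [|k /negPf k_neq].
  by rewrite matPE rev_ordK eqxx mul1r addr0.
by rewrite matPE -(inj_eq rev_ord_inj) rev_ordK eq_sym k_neq mul0r.
Qed.

Definition strict_lower_mx : 'M[R]_s := \matrix_(i, j) ((j < i)%N)%:R.
Definition strict_upper_mx : 'M[R]_s := \matrix_(i, j) ((i < j)%N)%:R.

Lemma bandA_block :
  bandA R s = block_mx (const_mx 1) strict_lower_mx strict_upper_mx (const_mx 1).
Proof.
apply/matrixP => i j; rewrite -(splitK i) -(splitK j).
case: (split i) => i'; case: (split j) => j';
  move: (ltn_ord i') (ltn_ord j') => lt_i lt_j;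
  rewrite /= ?block_mxEul ?block_mxEur ?block_mxEdl ?block_mxEdr !mxE /=;
  by case: ifP => //; try case: ltnP => //; lia.
Qed.

Lemma matDE : matD R s = const_mx 1 + strict_lower_mx *m matP R s.
Proof.
apply/matrixP => i j; rewrite [RHS]mxE mulmx_matP !mxE /=.
have -> : (s - j.+1 < i)%N = ~~ (i + j + 2 <= s + 1)%N by have := ltn_ord j; lia.
by case: ifP; rewrite ?addr0 ?natr1.
Qed.

Lemma matP_matDE :
  matP R s *m matD R s = strict_upper_mx + const_mx 1 *m matP R s.
Proof.
apply/matrixP => i j; rewrite [RHS]mxE mulmx_matP matP_mulmx !mxE /=.
have -> : (s - i.+1 + j + 2 <= s + 1)%N = ~~ (i < j)%N by have := ltn_ord i; lia.
by case: ltnP; rewrite ?add0r ?natr1.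
Qed.

End BlockDecomposition.

Theorem lemma13 (R : realFieldType) (s : nat) (hs : (1 <= s)%N)
    (x : 'cV[R]_s) (lambda : R) (hx : x != 0)
    (hD : matD R s *m x = lambda *: x) :
  bandA R s *m col_mx x (matP R s *m x) = lambda *: col_mx x (matP R s *m x).
Proof.
rewrite bandA_block mul_block_col !mulmxA -!mulmxDl.
by rewrite -matDE -matP_matDE -mulmxA hD -scalemxAr scale_col_mx.
Qed.
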